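(* In every approval-based SCV instance, every committee maximizing the SW-PAV score among all committees satisfies weak-SW-JR.
   Context: An approval-based sub-committee voting (SCV) instance consists of a set of voters $N=\{1,\ldots,n\}$, a finite set of candidates $C$ partitioned into candidate subsets $C_1,\ldots,C_\ell$, positive integer quotas $k_j\le |C_j|$ with $k=\sum_{j=1}^\ell k_j$, and approval ballots $A_i\subseteq C$ for $i\in N$. A committee is a set $W\subseteq C$ with $|W\cap C_j|=k_j$ for every $j$. Let $r(0)=0$ and $r(t)=\sum_{p=1}^t 1/p$ for $t\ge1$. The SW-PAV score of $W$ is $\sum_{i\in N} r(|W\cap A_i|)$. $W$ satisfies weak-SW-JR if for every $X\subseteq N$ with $|X|\ge n/k$ and $|(\bigcap_{i\in X}A_i)\cap C_j|\ge 1$ for all $j=1,\ldots,\ell$ we have $|W\cap \bigcup_{i\in X}A_i|\ge 1$. *)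

From HB Require Import structures.
From mathcomp Require Import all_boot all_order all_algebra.
Set Implicit Arguments. Unset Strict Implicit. Unset Printing Implicit Defensive.
Import Order.TTheory GRing.Theory Num.Theory.

(* An SCV instance: voters V (finType, N), candidates C (finType),
   partition of C into C_0..C_{l-1} given by part : C -> 'I_l,
   quotas q : 'I_l -> nat, approval ballots A : V -> {set C}. *)

Definition csub (C : finType) (l : nat) (part : C -> 'I_l) (j : 'I_l) : {set C} :=
  [set c | part c == j].

Definition ksize (l : nat) (q : 'I_l -> nat) : nat := \sum_(j < l) q j.

Definition is_committee (C : finType) (l : nat) (part : C -> 'I_l)
  (q : 'I_l -> nat) (W : {set C}) : Prop :=
  forall j : 'I_l, #|W :&: csub part j| = q j.

Definition harm (t : nat) : rat := \sum_(1 <= p < t.+1) (p%:R)^-1.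

Definition swpav (V C : finType) (A : V -> {set C}) (W : {set C}) : rat :=
  \sum_(i : V) harm #|W :&: A i|.

Definition weak_SW_JR (V C : finType) (l : nat) (part : C -> 'I_l)
  (q : 'I_l -> nat) (A : V -> {set C}) (W : {set C}) : Prop :=
  forall X : {set V},
    ((#|V|%:R / (ksize q)%:R : rat) <= #|X|%:R)%R ->
    (forall j : 'I_l, exists c, c \in csub part j /\ (forall i, i \in X -> c \in A i)) ->
    exists c, c \in W /\ (exists i, i \in X /\ c \in A i).

From HB Require Import structures.
From mathcomp Require Import all_boot all_order all_algebra.
From mathcomp Require Import lra zify.
Import Order.TTheory GRing.Theory Num.Theory.

Set Implicit Arguments.
Unset Strict Implicit.
Unset Printing Implicit Defensive.

(* Suppose an optimal committee W contains no candidate approved by anyone in a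
   cohesive group X with |X| >= n/k.  Split each voter's last marginal PAV
   utility 1/|W ∩ A_i| among the members of W she approves: member w gets
   D(w) = Σ_i [w ∈ A_i] / |W ∩ A_i|.  These shares add up to the number of
   voters approving some member of W, at most n - |X|, so some w has
   k D(w) <= n - |X|.  Swapping w for the candidate c of w's subset that all of
   X approves respects the quotas, costs at most D(w) and gives every voter of
   X a utility of 1, so the score changes by at least
   |X| - D(w) >= |X| - (n - |X|)/k >= |X|/k > 0, contradicting optimality. *)

Section Harmonic.
Local Open Scope ring_scope.

Lemma harm0 : harm 0 = 0.
Proof. by rewrite /harm big_geq. Qed.

Lemma harmS t : harm t.+1 = harm t + t.+1%:R^-1.
Proof. by rewrite /harm big_nat_recr. Qed.

Lemma ler_harm m n : (m <= n)%N -> harm m <= harm n.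
Proof.
move=> le_mn; rewrite /harm [leRHS](@big_cat_nat _ _ _ m.+1) //= lerDl.
by apply: sumr_ge0 => p _; rewrite invr_ge0.
Qed.

End Harmonic.

Lemma cardsI_sum (T : finType) (A S : {set T}) :
  #|A :&: S| = \sum_(x in A) (x \in S).
Proof.
rewrite -sum1_card [LHS]big_mkcond [RHS]big_mkcond; apply: eq_bigr => x _.
by rewrite inE; case: (x \in A); case: (x \in S).
Qed.

Lemma cardsI_swap (T : finType) (W S : {set T}) (w c : T) :
  w \in W -> c \notin W ->
  #|(c |: W :\ w) :&: S| + (w \in S) = #|W :&: S| + (c \in S).
Proof.
move=> wW cNW; have cNWw : c \notin W :\ w by rewrite inE (negbTE cNW) andbF.
by rewrite !cardsI_sum big_setU1 // (big_setD1 w wW) /=; lia.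
Qed.

Section SwapBounds.
Local Open Scope ring_scope.
Variables (C : finType) (W : {set C}) (w c : C).
Hypotheses (wW : w \in W) (cNW : c \notin W).

Lemma harm_swap_ge (S : {set C}) :
  - ((w \in S)%:R / #|W :&: S|%:R) <= harm #|(c |: W :\ w) :&: S| - harm #|W :&: S|.
Proof.
have := cardsI_swap S wW cNW; case: (boolP (w \in S)) => wS /= card_eq.
  have : (0 < #|W :&: S|)%N by apply/card_gt0P; exists w; rewrite inE wW.
  move: card_eq; case: #|W :&: S| => // a card_eq _.
  have := @ler_harm a #|(c |: W :\ w) :&: S| ltac:(lia).
  rewrite harmS mul1r opprD addrA => le_ab.
  by apply: ler_wpDl; rewrite ?subr_ge0.
rewrite mul0r oppr0 subr_ge0 ler_harm //; lia.
Qed.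

Lemma harm_swap_disjoint (S : {set C}) :
  [disjoint W & S] -> c \in S -> harm #|(c |: W :\ w) :&: S| - harm #|W :&: S| = 1.
Proof.
move=> WS_disj cS; have := cardsI_swap S wW cNW.
rewrite (disjointFr WS_disj wW) (disjoint_setI0 WS_disj) cards0 cS addn0 add0n => ->.
by rewrite harmS harm0 add0r subr0 invr1.
Qed.

End SwapBounds.

Lemma exists_mulr_card_le_sum (R : realDomainType) (T : finType) (W : {set T})
    (f : T -> R) :
  W != set0 -> exists2 w, w \in W & (#|W|%:R * f w <= \sum_(x in W) f x)%R.
Proof.
case/set0Pn => w0 w0W; case: (arg_minP f w0W) => w wW w_min.
exists w => //; rewrite -sum1_card natr_sum mulr_suml.
by apply: ler_sum => x xW; rewrite mul1r w_min.
Qed.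

Section PAV.
Local Open Scope ring_scope.
Variables (V C : finType) (A : V -> {set C}) (W : {set C}).

Definition pav_marginal (w : C) : rat :=
  \sum_i (w \in A i)%:R / #|W :&: A i|%:R.

Lemma sum_pav_marginal :
  \sum_(w in W) pav_marginal w = #|[set i | W :&: A i != set0]|%:R.
Proof.
rewrite exchange_big /= -sum1_card natr_sum [RHS]big_mkcond /=.
apply: eq_bigr => i _; rewrite -mulr_suml -natr_sum -cardsI_sum inE.
have [->|WA_neq0] := eqVneq (W :&: A i) set0; first by rewrite cards0 mul0r.
by rewrite divff // pnatr_eq0 cards_eq0.
Qed.

Lemma sum_pav_marginal_le (X : {set V}) :
  (forall i, i \in X -> [disjoint W & A i]) ->
  \sum_(w in W) pav_marginal w + #|X|%:R <= #|V|%:R.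
Proof.
move=> X_disj.
rewrite sum_pav_marginal -natrD ler_nat -(cardsC X) addnC leq_add2l.
apply: subset_leq_card; apply/subsetP => i; rewrite !inE.
by apply: contra => /X_disj; rewrite setI_eq0.
Qed.

Lemma swpav_swap_ge (X : {set V}) (w c : C) :
  w \in W -> c \notin W ->
  (forall i, i \in X -> [disjoint W & A i]) -> (forall i, i \in X -> c \in A i) ->
  #|X|%:R - pav_marginal w <= swpav A (c |: W :\ w) - swpav A W.
Proof.
move=> wW cNW X_disj X_c.
rewrite /swpav -sumrB -sum1_card natr_sum big_mkcond /= -sumrB.
apply: ler_sum => i _; case: ifP => [iX | _].
  by rewrite (disjointFr (X_disj i iX) wW) mul0r subr0 harm_swap_disjoint ?X_disj ?X_c.
by rewrite sub0r harm_swap_ge.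
Qed.

End PAV.

Section Committees.
Variables (C : finType) (l : nat) (part : C -> 'I_l) (q : 'I_l -> nat).

Lemma ksize_gt0 : 0 < l -> (forall j, 0 < q j) -> 0 < ksize q.
Proof.
by move=> l_gt0 q_gt0; rewrite /ksize (bigD1 (Ordinal l_gt0)) //= ltn_addr.
Qed.

Lemma card_committee W : is_committee part q W -> #|W| = ksize q.
Proof.
move=> W_committee; rewrite /ksize -(eq_bigr _ (fun j _ => W_committee j)).
rewrite -sum1_card (partition_big part predT) //=; apply: eq_bigr => j _.
by rewrite -sum1_card; apply: eq_bigl => x; rewrite !inE.
Qed.

Lemma is_committee_swap W w c :
  is_committee part q W -> w \in W -> c \notin W -> part c = part w ->
  is_committee part q (c |: W :\ w).
Proof.
move=> W_committee wW cNW part_cw j.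
have := cardsI_swap (csub part j) wW cNW.
by rewrite W_committee !inE part_cw => /addIn.
Qed.

End Committees.

Theorem mainTheorem10 (V C : finType) (l : nat) (part : C -> 'I_l)
  (q : 'I_l -> nat) (A : V -> {set C}) :
  0 < #|V| -> 0 < l ->
  (forall j, 0 < q j) ->
  (forall j, q j <= #|csub part j|) ->
  forall W : {set C},
    is_committee part q W ->
    (forall W' : {set C}, is_committee part q W' -> (swpav A W' <= swpav A W)%R) ->
    weak_SW_JR part q A W.
Proof.
move=> V_gt0 l_gt0 q_gt0 _ W W_committee W_opt X X_large X_cohesive.
have [/forall_inP X_disj | ] := boolP [forall i in X, [disjoint W & A i]]; last first.
  rewrite negb_forall_in => /exists_inP [i iX]; rewrite -setI_eq0 => /set0Pn [c].
  by case/setIP => cW cA; exists c; split=> //; exists i.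
exfalso.
have k_gt0 := ksize_gt0 l_gt0 q_gt0.
have X_gt0 : 0 < #|X|.
  rewrite lt0n; apply: contraTneq X_large => ->.
  by rewrite -ltNge divr_gt0 ?ltr0n.
have W_neq0 : W != set0 by rewrite -card_gt0 (card_committee W_committee).
have [w wW] := exists_mulr_card_le_sum (pav_marginal A W) W_neq0.
rewrite (card_committee W_committee) => w_small.
have [c [c_part c_X]] := X_cohesive (part w).
have cNW : c \notin W.
  have /card_gt0P [i iX] := X_gt0.
  by rewrite (disjointFl (X_disj i iX) (c_X i iX)).
have W'_committee : is_committee part q (c |: W :\ w).
  by apply: is_committee_swap => //; move: c_part; rewrite inE => /eqP.
have gain := swpav_swap_ge wW cNW X_disj c_X.
have no_gain := W_opt _ W'_committee.
have shares := sum_pav_marginal_le X_disj.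
move: X_large; rewrite ler_pdivrMr ?ltr0n // => X_large.
have : (0 < #|X|%:R :> rat)%R by rewrite ltr0n.
have : (0 < (ksize q)%:R :> rat)%R by rewrite ltr0n.
nra.
Qed.
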